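(* Let $A$ be a finite alphabet and $k\ge 0$. Then $\sim_{k+1}$ refines $\sim_k$, and $\sim_k$ is a congruence of finite index on $A^{\Delta}$ whose quotient forest algebra has idempotent and commutative horizontal monoid.
   Context: $A^{\Delta}=(H_A,V_A)$: $H_A$ is the monoid of forests over $A$ (finite ordered sequences of finite ordered $A$-labelled trees) under concatenation $+$; $V_A$ the monoid of contexts (forests with exactly one leaf replaced by a hole) acting by substitution; $as$ is the tree with root $a$ and child forest $s$. A congruence on $A^{\Delta}$ is an equivalence $\sim$ on $H_A$ with $s\sim s'\Rightarrow ps\sim ps'$ for every context $p$; the quotient forest algebra has horizontal monoid $H_A/{\sim}$ and vertical monoid the contexts modulo acting identically on classes. Equivalences $\sim_k$: $\sim_0$ identifies all forests; for $k\ge0$ and $s=a_1s_1+\cdots+a_rs_r$ ($a_i\in A$, $s_i\in H_A$) let $T^{k+1}_s=\{(a_i,[s_i]_{\sim_k}):1\le i\le r\}$, and $s\sim_{k+1}s'$ iff $T^{k+1}_s=T^{k+1}_{s'}$. *)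

From mathcomp Require Import all_boot.
From Stdlib Require List.

Set Implicit Arguments.
Unset Strict Implicit.
Unset Printing Implicit Defensive.

Inductive tree (A : Type) : Type :=
  | Node : A -> list (tree A) -> tree A.

Definition forest (A : Type) := list (tree A).

Definition label A (t : tree A) : A := let: Node a _ := t in a.
Definition children A (t : tree A) : forest A := let: Node _ s := t in s.

Definition fplus A (s t : forest A) : forest A := s ++ t.

(* Contexts (V_A): forests with exactly one leaf replaced by a hole.
   Hole: the bare hole; CPlus l c r : l + c + r; CNode a c : the tree a(c). *)
Inductive context (A : Type) : Type :=
  | Hole : context A
  | CPlus : forest A -> context A -> forest A -> context A
  | CNode : A -> context A -> context A.

Fixpoint subst A (p : context A) (s : forest A) : forest A :=
  match p with
  | Hole => s
  | CPlus l c r => l ++ subst c s ++ r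
  | CNode a c => [:: Node a (subst c s)]
  end.

(* The equivalences ~_k.  s ~_{k+1} s' iff T^{k+1}_s = T^{k+1}_{s'}, where
   T^{k+1}_s = { (a_i, [s_i]_{~k}) }; equality of the classes [u]_{~k} and
   [v]_{~k} is written extensionally as (forall w, u ~k w <-> v ~k w). *)
Definition subsetT A (simk : forest A -> forest A -> Prop) (s s' : forest A) :=
  forall x, List.In x s -> exists y, List.In y s' /\ label x = label y /\
    (forall w, simk (children x) w <-> simk (children y) w).

Fixpoint sim A (k : nat) : forest A -> forest A -> Prop :=
  match k with
  | 0 => fun _ _ => True
  | k'.+1 => fun s s' => subsetT (sim k') s s' /\ subsetT (sim k') s' s
  end.

Definition is_congruence A (R : forest A -> forest A -> Prop) :=
  [/\ (forall s, R s s),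
      (forall s t, R s t -> R t s),
      (forall s t u, R s t -> R t u -> R s u)
    & (forall p s t, R s t -> R (subst p s) (subst p t))].

Definition finite_index A (R : forest A -> forest A -> Prop) :=
  exists reps : seq (forest A), forall s, exists r, List.In r reps /\ R s r.

(* The quotient horizontal monoid H_A/R (with [s]+[t] = [s+t]) is
   idempotent and commutative. *)
Definition horiz_idem_comm A (R : forest A -> forest A -> Prop) :=
  (forall s, R (fplus s s) s) /\ (forall s t, R (fplus s t) (fplus t s)).

From Pilot Require Import Defs.
From mathcomp Require Import all_boot.
From Stdlib Require Import Classical.

Set Implicit Arguments.
Unset Strict Implicit.
Unset Printing Implicit Defensive.

(* s ~_{k+1} t says that the roots of s and of t carry the same SET of pairs
   (label, ~_k-class of the children).  Hence ~_{k+1} only sees which root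
   pairs occur: repeating or permuting roots is invisible (idempotence and
   commutativity), it is compatible with concatenation and with putting a
   common root on top (so with every context), and, by induction on k, each
   class is determined by a subset of the finite set A x (H_A / ~_k). *)

Section Similarity.
Variable A : Type.
Implicit Types (s t u : forest A) (R : forest A -> forest A -> Prop).

Lemma subsetT_incl R s t :
  (forall x, List.In x s -> List.In x t) -> Defs.subsetT R s t.
Proof. by move=> st x sx; exists x; split; [exact: st | split=> // w]. Qed.

Lemma subsetT_trans R s t u :
  Defs.subsetT R s t -> Defs.subsetT R t u -> Defs.subsetT R s u.
Proof.
move=> st tu x sx; have [y [ty [lxy cxy]]] := st x sx.
have [z [uz [lyz cyz]]] := tu y ty.
by exists z; split=> //; split=> [|w]; [rewrite lxy | rewrite cxy].
Qed.

Lemma subsetT_cat R s1 t1 s2 t2 :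
  Defs.subsetT R s1 t1 -> Defs.subsetT R s2 t2 -> Defs.subsetT R (s1 ++ s2) (t1 ++ t2).
Proof.
move=> st1 st2 x /(List.in_app_or _ _ _) [sx | sx].
- by have [y [ty xy]] := st1 x sx; exists y; split=> //; apply: List.in_or_app; left.
- by have [y [ty xy]] := st2 x sx; exists y; split=> //; apply: List.in_or_app; right.
Qed.

Lemma sim_In_eq k s t :
  (forall x, List.In x s <-> List.In x t) -> sim k s t.
Proof. by case: k => //= k st; split; apply: subsetT_incl => x /st. Qed.

Lemma sim_refl k s : sim k s s.
Proof. exact: sim_In_eq. Qed.

Lemma sim_sym k s t : sim k s t -> sim k t s.
Proof. by case: k => [|k] //= []. Qed.

Lemma sim_trans k s t u : sim k s t -> sim k t u -> sim k s u.
Proof. by case: k => [|k] //= [st ts] [tu ut]; split; apply: subsetT_trans; eauto. Qed.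

Lemma sim_class k s t : sim k s t -> forall u, sim k s u <-> sim k t u.
Proof.
by move=> st u; split=> [|tu]; [apply: sim_trans (sim_sym st) | apply: sim_trans tu].
Qed.

Lemma sim_refine k s t : sim k.+1 s t -> sim k s t.
Proof.
elim: k s t => [|k IH] //= s t.
have refine_subsetT s' t' : Defs.subsetT (sim k.+1) s' t' -> Defs.subsetT (sim k) s' t'.
  move=> st x sx; have [y [ty [lxy cxy]]] := st x sx.
  by exists y; do 2!split=> //; apply/sim_class/IH/cxy/sim_refl.
by case=> st ts; split; apply: refine_subsetT.
Qed.

Lemma sim_cat k s1 t1 s2 t2 : sim k s1 t1 -> sim k s2 t2 -> sim k (s1 ++ s2) (t1 ++ t2).
Proof. by case: k => [|k] //= [st1 ts1] [st2 ts2]; split; apply: subsetT_cat. Qed.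

Lemma sim_Node k a s t : sim k s t -> sim k [:: Node a s] [:: Node a t].
Proof.
case: k => [|k] //= st; have st' := sim_refine st.
split=> x /= [<- | []].
- by exists (Node a t); split; [left | split=> //; apply: sim_class].
- by exists (Node a s); split; [left | split=> //; apply/sim_class/sim_sym].
Qed.

Lemma sim_subst k (p : context A) s t : sim k s t -> sim k (subst p s) (subst p t).
Proof.
move=> st; elim: p => [|l c IH r|a c IH] //=; last exact: sim_Node.
by apply: sim_cat (sim_refl _ _) _; apply: sim_cat IH (sim_refl _ _).
Qed.

Lemma sim_catss k s : sim k (s ++ s) s.
Proof.
apply: sim_In_eq => x; split=> [/(List.in_app_or _ _ _) [] // | sx].
by apply: List.in_or_app; left.
Qed.

Lemma sim_catC k s t : sim k (s ++ t) (t ++ s).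
Proof.
by apply: sim_In_eq => x; split=> /(List.in_app_or _ _ _) xst; apply: List.in_or_app; tauto.
Qed.

End Similarity.

Fixpoint sublists (T : Type) (L : list T) : list (list T) :=
  if L is x :: L' then map (cons x) (sublists L') ++ sublists L' else [:: [::]].

Lemma sublists_select (T : Type) (L : list T) (P : T -> Prop) :
  exists S, List.In S (sublists L) /\ forall y, List.In y S <-> List.In y L /\ P y.
Proof.
elim: L => [|x L [S [subS memS]]] /=.
  by exists [::]; split; [left | move=> y /=; tauto].
have [Px | nPx] := classic (P x).
- exists (x :: S); split; first by apply: List.in_or_app; left; apply: List.in_map.
  by move=> y /=; rewrite memS; split=> [[<- | ] | [[-> | ] Py]]; tauto.
- exists S; split; first by apply: List.in_or_app; right.
  by move=> y; rewrite memS; split=> [ | [[<- | ] Py]]; tauto.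
Qed.

Lemma In_enum (T : finType) (x : T) : List.In x (enum T).
Proof.
have : x \in enum T by rewrite mem_enum.
elim: (enum T) => [|y s IH] //=.
by rewrite in_cons => /orP [/eqP <- | /IH]; [left | right].
Qed.

Lemma sim_finite_index (A : finType) k : finite_index (@sim A k).
Proof.
elim: k => [|k [reps reps_cover]].
  by exists [:: [::]] => s; exists [::]; split=> //; left.
pose node (p : A * forest A) := Node p.1 p.2.
exists (map (map node) (sublists (List.list_prod (enum A) reps))) => s.
pose occurs (p : A * forest A) :=
  exists x, List.In x s /\ label x = p.1 /\ sim k (children x) p.2.
have [S [subS memS]] := sublists_select (List.list_prod (enum A) reps) occurs.
exists (map node S); split; first exact: List.in_map.
split=> [x sx | y /(List.in_map_iff _ _ _) [[a r] [<- Sar]]].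
- have [r [reps_r xr]] := reps_cover (children x).
  have Sxr : List.In (label x, r) S.
    by apply/memS; split; [apply: List.in_prod; first exact: In_enum | exists x].
  by exists (node (label x, r)); split; [apply: List.in_map | split=> //; apply: sim_class].
- have [_ [x [sx [lx xr]]]] := (memS _).1 Sar.
  by exists x; split=> //; split=> //; apply/sim_class/sim_sym.
Qed.

Theorem proposition3 (A : finType) (k : nat) :
  (forall s t : forest A, sim k.+1 s t -> sim k s t) /\
  is_congruence (@sim A k) /\
  finite_index (@sim A k) /\
  horiz_idem_comm (@sim A k).
Proof.
split; first exact: sim_refine.
split; first by split; [exact: sim_refl | exact: sim_sym | exact: sim_trans | exact: sim_subst].
split; first exact: sim_finite_index.
by split; [exact: sim_catss | exact: sim_catC].
Qed.
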